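(* Let $\mathbb{F}$ be an archimedean partially ordered field. Then $\mathbb{F}$ is localizable and the extended Gelfand transformation $\widehat{\cdot}\colon\mathbb{F}\to\mathscr{C}_{\mathrm{a.e.}}(\mathcal{K}(\mathbb{F}))$ is a positive ring morphism and an order embedding.
   Context: All rings are commutative with unit $1$; ring morphisms are unital. A partially ordered commutative ring is a commutative ring $R$ with a partial order $\le$ such that $r\le s$ implies $r+t\le s+t$, and whose positive cone $R^+=\{r:0\le r\}$ is closed under multiplication and contains all squares. A partially ordered field is a partially ordered commutative ring in which every nonzero element is invertible. A ring morphism $\Phi$ is positive if $\Phi(R^+)\subseteq S^+$, an order embedding if it is positive and $\Phi^{-1}(S^+)\subseteq R^+$. $\mathbb{N}=\{1,2,\dots\}$, $\mathbb{N}_0=\mathbb{N}\cup\{0\}$. $R$ is archimedean if $kg+h\in R^+$ for all $k\in\mathbb{N}$ implies $g\in R^+$. $\mathrm{Loc}(R)$ is the set of $s\in1+R^+$ such that $rs\in R^+$ implies $r\in R^+$ for all $r\in R$; $R$ is localizable if every $r$ satisfies $-s\le r\le s$ for some $s\in\mathrm{Loc}(R)$. For a topological space $X$: $\mathscr{C}_{\mathrm{a.e.}}(X)$ is the set of continuous real functions defined on dense open subsets of $X$ modulo $f\approx g$ iff $f,g$ agree on some dense open subset of $\operatorname{dom}f\cap\operatorname{dom}g$, with operations pointwise on the intersection of domains, and order $[f]\le[g]$ iff $f\le g$ pointwise on some dense open subset of $\operatorname{dom}f\cap\operatorname{dom}g$. $R_{\mathrm{loc}}$: fractions $r/s$ ($r\in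 R$, $s\in\mathrm{Loc}(R)$), $r/s=r'/s'$ iff $rs'=r's$, usual operations, $p/q\le r/s$ iff $ps\le rq$. $R^{\mathrm{bd}}_{\mathrm{loc}}=\{a\in R_{\mathrm{loc}}:\exists n\in\mathbb{N}_0,\ -n\le a\le n\}$. $\mathcal{K}(R)$: the ring morphisms $\varphi\colon R^{\mathrm{bd}}_{\mathrm{loc}}\to\mathbb{R}$ with $\varphi(a)\ge0$ for $a\ge0$, with the weak-$*$ topology. $\mathrm{O}_{s<\infty}=\{\varphi\in\mathcal{K}(R):\varphi(1/s)>0\}$ for $s\in\mathrm{Loc}(R)$; for archimedean localizable $R$ these are dense open subsets of $\mathcal{K}(R)$. The extended Gelfand transformation sends $r\in R$ to the class $\widehat r\in\mathscr{C}_{\mathrm{a.e.}}(\mathcal{K}(R))$ of the continuous function $r_s\colon\mathrm{O}_{s<\infty}\to\mathbb{R}$, $\varphi\mapsto\varphi(1/s)^{-1}\varphi(r/s)$, where $s\in\mathrm{Loc}(R)$ is any element with $r/s\in R^{\mathrm{bd}}_{\mathrm{loc}}$ (the class does not depend on $s$). *)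

From HB Require Import structures.
From mathcomp Require Import all_boot all_order all_algebra.
From mathcomp Require Import all_classical all_reals all_analysis.
Set Implicit Arguments. Unset Strict Implicit. Unset Printing Implicit Defensive.
Import Order.TTheory GRing.Theory Num.Theory numFieldNormedType.Exports.
Local Open Scope classical_set_scope.
Local Open Scope ring_scope.

Section PO.
Variables (R : comPzRingType) (le : R -> R -> Prop).

Definition po_ring : Prop :=
  (forall r, le r r) /\
  (forall r s, le r s -> le s r -> r = s) /\
  (forall r s t, le r s -> le s t -> le r t) /\
  (forall r s t, le r s -> le (r + t) (s + t)) /\
  (forall r s, le 0 r -> le 0 s -> le 0 (r * s)) /\
  (forall r, le 0 (r * r)).

Definition po_field : Prop :=
  po_ring /\ forall r : R, r != 0 -> exists u, r * u = 1.

Definition archimedean : Prop :=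
  forall g h : R, (forall k : nat, le 0 (k.+1%:R * g + h)) -> le 0 g.

Definition Loc (s : R) : Prop :=
  le 0 (s - 1) /\ forall r, le 0 (r * s) -> le 0 r.

Definition localizable : Prop :=
  forall r : R, exists s, Loc s /\ le (- s) r /\ le r s.

Definition frac_eq (a b : R * R) : Prop := a.1 * b.2 = b.1 * a.2.
Definition frac_add (a b : R * R) : R * R := (a.1 * b.2 + b.1 * a.2, a.2 * b.2).
Definition frac_mul (a b : R * R) : R * R := (a.1 * b.1, a.2 * b.2).
Definition frac_le (a b : R * R) : Prop := le (a.1 * b.2) (b.1 * a.2).

Definition bd (a : R * R) : Prop :=
  Loc a.2 /\ exists n : nat, frac_le ((- n%:R), 1) a /\ frac_le a (n%:R, 1).

Variable RR : realType.

Definition is_character (phi : R * R -> RR) : Prop :=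
  (forall a, ~ bd a -> phi a = 0) /\
  (forall a b, bd a -> bd b -> frac_eq a b -> phi a = phi b) /\
  (forall a b, bd a -> bd b -> phi (frac_add a b) = phi a + phi b) /\
  (forall a b, bd a -> bd b -> phi (frac_mul a b) = phi a * phi b) /\
  phi (1, 1) = 1 /\
  (forall a, bd a -> frac_le (0, 1) a -> 0 <= phi a).

Definition Kset : set {ptws (R * R) -> RR} := [set phi | is_character phi].

Definition Oinf (s : R) : set (set_type Kset) := [set phi | 0 < set_val phi (1, s)].
Definition gel (r s : R) : set_type Kset -> RR :=
  fun phi => (set_val phi (1, s))^-1 * set_val phi (r, s).
End PO.

Section Cae.
Variables (X : topologicalType) (RR : realType).
Definition cae_elem (D : set X) (f : X -> RR) : Prop :=
  [/\ open D, dense D & {within D, continuous f}].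
Definition cae_eq (D : set X) (f : X -> RR) (E : set X) (g : X -> RR) : Prop :=
  exists U : set X, [/\ open U, dense U, U `<=` D `&` E & forall x, U x -> f x = g x].
Definition cae_le (D : set X) (f : X -> RR) (E : set X) (g : X -> RR) : Prop :=
  exists U : set X, [/\ open U, dense U, U `<=` D `&` E & forall x, U x -> f x <= g x].
End Cae.

Arguments Kset [R] le RR.
Arguments Oinf [R] le RR s _.
Arguments gel [R] le RR r s _.

From HB Require Import structures.
From mathcomp Require Import all_boot all_order all_algebra.
From mathcomp Require Import all_classical all_reals all_analysis.
From mathcomp Require Import ring lra.
Import Order.TTheory GRing.Theory Num.Theory numFieldNormedType.Exports.
Local Open Scope classical_set_scope.
Local Open Scope ring_scope.
Set Implicit Arguments. Unset Strict Implicit.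

(* Since F is a field, its localization is F itself and the bounded part R^bd_loc is the
   subring of elements x with -n <= x <= n; characters are the positive ring morphisms from
   it to the reals, and the Gelfand transform of r is phi |-> phi (r/s) / phi (1/s).
   Everything rests on separation: if g is bounded and -g is not positive, some character
   is positive at g.  By the archimedean property 1 - (k+1) g is not positive for some k;
   Zorn's lemma extends the positive cone to a total cone containing (k+1) g - 1, and the
   standard part with respect to that total order is a character with value >= 1/(k+1)
   at g.  Applied to n + 1 minus a sum of n squares of rescaled coordinates, separation
   shows that every O_{s<oo} is dense; applied to -r/s it gives the order embedding.  The ring
   identities hold pointwise on intersections of the O's, because phi (r/s) / phi (1/s)
   does not depend on the denominator s. *)

Lemma exists_nat_boundary (P : nat -> Prop) K : P 0%N -> ~ P K ->
  exists k, P k /\ ~ P k.+1.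
Proof.
move=> P0; elim: K => [//|K ih] nPK.
by have [PK|/ih//] := pselect (P K); exists K.
Qed.

Lemma eq0_of_natmul_bounded (R : archiRealFieldType) (d C : R) :
  (forall N : nat, N.+1%:R * `|d| <= C) -> d = 0.
Proof.
move=> bdd; apply/eqP; apply: contraT => nd; have pd : 0 < `|d| by rewrite normr_gt0.
have := bdd (Num.truncn (C / `|d|)); rewrite -ler_pdivlMr // => /lt_le_trans.
by move/(_ _ (truncnS_gt _)); rewrite ltxx.
Qed.

Lemma sum_sqr_le_size (R : realDomainType) (I : Type) (l : seq I) (u : I -> R) :
  (forall i, 0 <= u i <= 1) -> \sum_(i <- l) u i ^+ 2 <= (size l)%:R.
Proof.
move=> u01; elim: l => [|i l ih]; first by rewrite big_nil.
by rewrite big_cons /= -[(size l).+1]addn1 natrD addrC lerD // expr_le1 //; case/andP: (u01 i).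
Qed.

Lemma norm_lt_of_sum_sqr (R : realDomainType) (I : eqType) (l : seq I) (u : I -> R) i m :
  1 <= m -> i \in l -> \sum_(j <- l) u j ^+ 2 < m -> `|u i| < m.
Proof.
move=> m1 il; rewrite (perm_big _ (perm_to_rem il)) big_cons => lt_m.
have ui_m : `|u i| ^+ 2 < m.
  rewrite real_normK ?num_real //; apply: le_lt_trans lt_m.
  by rewrite lerDl; apply: sumr_ge0 => j _; exact: sqr_ge0.
by rewrite ltNge; apply/negP => ge_m; have := normr_ge0 (u i); nra.
Qed.

Section AlmostEverywhere.
Variables (X : topologicalType) (RR : realType).

Lemma cae_eqW (D E : set X) (f g : X -> RR) :
  open (D `&` E) -> dense (D `&` E) -> (forall x, (D `&` E) x -> f x = g x) ->
  cae_eq D f E g.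
Proof. by move=> oDE dDE fg; exists (D `&` E); split. Qed.

Lemma cae_leW (D E : set X) (f g : X -> RR) :
  open (D `&` E) -> dense (D `&` E) -> (forall x, (D `&` E) x -> f x <= g x) ->
  cae_le D f E g.
Proof. by move=> oDE dDE fg; exists (D `&` E); split. Qed.

End AlmostEverywhere.

Lemma initial_cvg (S : choiceType) (T : topologicalType) (f : S -> T)
    (G : set_system (initial_topology f)) (x : initial_topology f) :
  Filter G -> f @ G --> f x -> G --> x.
Proof.
move=> FG cvgf A; rewrite nbhsE => -[B [[B' oB' eB] Bx BA]].
have GB' : (f @ G) B' by apply: cvgf; apply: open_nbhs_nbhs; split=> //; rewrite -eB in Bx.
by rewrite nbhs_filterE; apply: (@filterS _ G _ _ _ _ GB') => y B'y; apply: BA; rewrite -eB.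
Qed.

Section CharacterSpace.
Variables (F : comPzRingType) (le : F -> F -> Prop) (RR : realType).
Local Notation X := (set_type (Kset le RR)).

Lemma eval_continuous (p : F * F) : continuous (fun c : X => set_val c p).
Proof.
move=> c; apply: (@continuous_comp _ _ _ set_val (fun f : {ptws F * F -> RR} => f p)).
  exact: initial_continuous.
exact: (@proj_continuous _ (fun _ : F * F => RR) p).
Qed.

Lemma cvg_ptws (G : set_system X) (c : X) : Filter G ->
  (forall p, (fun d : X => set_val d p) @ G --> set_val c p) ->
  set_val @ G --> (set_val c : {ptws F * F -> RR}).
Proof. by move=> FG cvgG; apply/cvg_sup => p; apply: initial_cvg; exact: cvgG. Qed.

Lemma cvg_character (G : set_system X) (c : X) : Filter G ->
  (forall p, (fun d : X => set_val d p) @ G --> set_val c p) -> G --> c.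
Proof. by move=> FG cvgG; apply: (initial_cvg (f := set_val)); exact: cvg_ptws. Qed.

Lemma open_eval_gt0 (a : F * F) : open [set c : X | 0 < set_val c a].
Proof.
have -> : [set c : X | 0 < set_val c a] = (fun c : X => set_val c a) @^-1` [set x | 0 < x] by [].
by apply: open_comp; [move=> c _; exact: eval_continuous|exact: open_gt].
Qed.

Lemma open_eval_lt0 (a : F * F) : open [set c : X | set_val c a < 0].
Proof.
have -> : [set c : X | set_val c a < 0] = (fun c : X => set_val c a) @^-1` [set x | x < 0] by [].
by apply: open_comp; [move=> c _; exact: eval_continuous|exact: open_lt].
Qed.

Lemma open_Oinf s : open (Oinf le RR s). Proof. exact: open_eval_gt0. Qed.

Lemma gel_continuous r s : {within Oinf le RR s, continuous (gel le RR r s)}.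
Proof.
apply: continuous_in_subspaceT => c /set_mem c1s.
have Fc : Filter (nbhs c) := nbhs_filter c.
apply: (@cvgM _ _ _ Fc (fun d : X => (set_val d (1, s))^-1)); last exact: eval_continuous.
by apply: (@cvgV _ _ _ Fc (fun d : X => set_val d (1, s))); [rewrite gt_eqF|exact: eval_continuous].
Qed.

End CharacterSpace.

(** * Partially ordered fields *)

Section POField.
Variables (F : comPzRingType) (le : F -> F -> Prop).
Hypothesis po : po_field le.
Local Notation pos x := (le 0 x).

Lemma po_refl x : le x x. Proof. by case: po => [[h _] _]. Qed.
Lemma po_anti x y : le x y -> le y x -> x = y. Proof. by case: po => [[_ [h _]] _]; apply: h. Qed.
Lemma po_trans x y z : le x y -> le y z -> le x z.
Proof. by case: po => [[_ [_ [h _]]] _]; apply: h. Qed.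
Lemma po_addr x y t : le x y -> le (x + t) (y + t).
Proof. by case: po => [[_ [_ [_ [h _]]]] _]; apply: h. Qed.
Lemma posM x y : pos x -> pos y -> pos (x * y).
Proof. by case: po => [[_ [_ [_ [_ [h _]]]]] _]; apply: h. Qed.
Lemma pos_sqr x : pos (x * x). Proof. by case: po => [[_ [_ [_ [_ [_ h]]]]] _]. Qed.

Lemma leE x y : le x y <-> pos (y - x).
Proof.
split=> [/(po_addr (- x))|/(po_addr x)]; first by rewrite subrr.
by rewrite add0r subrK.
Qed.

Lemma posD x y : pos x -> pos y -> pos (x + y).
Proof. by move=> /(po_addr y); rewrite add0r => hx hy; apply: po_trans hy hx. Qed.

Lemma pos0 : pos 0. Proof. exact: po_refl. Qed.
Lemma pos1 : pos 1. Proof. by have := pos_sqr 1; rewrite mulr1. Qed.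

Lemma pos_nat n : pos n%:R.
Proof. by elim: n => [|n ih]; [exact: pos0|rewrite -addn1 natrD; apply: posD ih pos1]. Qed.

Lemma pos_opp1 : pos (-1) -> forall x : F, x = 0.
Proof.
move=> pm1 x; have e : (1 : F) = 0 by apply: po_anti _ pos1; apply/leE; rewrite sub0r.
by rewrite -[x]mulr1 e mulr0.
Qed.

Lemma pos_of_mul1 x u : pos x -> x * u = 1 -> pos u.
Proof. by move=> px xu; rewrite -[u]mul1r -xu mulrAC -mulrA; apply: posM px (pos_sqr u). Qed.

Lemma pos_half x : pos (x + x) -> pos x.
Proof.
move=> p2x; have [e2|n2] := eqVneq (2%:R : F) 0.
  have pm1 : pos (-1).
    have -> : -1 = 1 - 2%:R :> F by ring.
    by rewrite e2 subr0; exact: pos1.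
  by rewrite (pos_opp1 pm1 x); exact: pos0.
have [u hu] := proj2 po _ n2.
have -> : x = (x + x) * u by rewrite -mulr2n -mulr_natr -mulrA hu mulr1.
by apply: posM p2x (pos_of_mul1 (pos_nat 2) hu).
Qed.

(* Only used at elements s >= 1, which are invertible; elsewhere it is the junk value 0. *)
Definition recip (x : F) := xget 0 [set u | x * u = 1].

Lemma mulr_recip s : pos (s - 1) -> s * recip s = 1.
Proof.
move=> ps; have [s0|s0] := eqVneq s 0.
  have pm1 : pos (-1) by move: ps; rewrite s0 sub0r.
  by rewrite (pos_opp1 pm1 (s * _)) (pos_opp1 pm1 1).
have [u su] := proj2 po _ s0.
by have := @xgetPex _ 0 [set u | s * u = 1] (ex_intro _ u su).
Qed.

Lemma pos_of_loc s : pos (s - 1) -> pos s.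
Proof. by move=> ps; rewrite -(subrK 1 s); apply: posD ps pos1. Qed.

Lemma pos_recip s : pos (s - 1) -> pos (recip s).
Proof. by move=> ps; apply: pos_of_mul1 (pos_of_loc ps) (mulr_recip ps). Qed.

Lemma LocE s : Loc le s <-> pos (s - 1).
Proof.
split=> [[]//|ps]; split=> // r prs.
by rewrite -[r]mulr1 -(mulr_recip ps) mulrA; apply: posM prs (pos_recip ps).
Qed.

Lemma loc1 : pos (1 - 1). Proof. by rewrite subrr; exact: pos0. Qed.

Lemma locM a b : pos (a - 1) -> pos (b - 1) -> pos (a * b - 1).
Proof.
move=> pa pb; have -> : a * b - 1 = (a - 1) * (b - 1) + ((a - 1) + (b - 1)) by ring.
by apply: posD (posM pa pb) (posD pa pb).
Qed.

Lemma recip_unique (x u v : F) : x * u = 1 -> x * v = 1 -> u = v.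
Proof. by move=> xu xv; rewrite -[u]mulr1 -xv mulrA (mulrC u) xu mul1r. Qed.

Lemma recip1 : recip 1 = 1.
Proof. by have := mulr_recip loc1; rewrite mul1r. Qed.

Lemma recipM a b : pos (a - 1) -> pos (b - 1) -> recip (a * b) = recip a * recip b.
Proof.
move=> pa pb; apply: recip_unique (mulr_recip (locM pa pb)) _.
by rewrite mulrACA !mulr_recip ?mulr1.
Qed.

Lemma po_field_localizable : localizable le.
Proof.
move=> r; exists (1 + r * r); split.
  by apply/LocE; rewrite (addrC 1) addrK; exact: pos_sqr.
have sqr_sum (a : F) : pos ((r + a) * (r + a) + (r * r + 1)).
  by apply: posD (pos_sqr _) (posD (pos_sqr _) pos1).
by split; apply/leE; apply: pos_half; [move: (sqr_sum 1)|move: (sqr_sum (-1))]; congr (le 0); ring.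
Qed.

(** * The bounded subring *)

Definition bounded (x : F) := exists n : nat, pos (n%:R - x) /\ pos (x + n%:R).

Lemma bounded_nat n : bounded n%:R.
Proof. by exists n; rewrite subrr -natrD; split; [exact: pos0|exact: pos_nat]. Qed.

Lemma bounded0 : bounded 0. Proof. exact: bounded_nat 0. Qed.
Lemma bounded1 : bounded 1. Proof. exact: bounded_nat 1. Qed.

Lemma boundedD x y : bounded x -> bounded y -> bounded (x + y).
Proof.
move=> [n [x1 x2]] [m [y1 y2]]; exists (n + m)%N; rewrite natrD; split.
  by move: (posD x1 y1); congr (le 0); ring.
by move: (posD x2 y2); congr (le 0); ring.
Qed.

Lemma boundedN x : bounded x -> bounded (- x).
Proof. by move=> [n [x1 x2]]; exists n; rewrite opprK addrC [- x + _]addrC. Qed.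

Lemma boundedB x y : bounded x -> bounded y -> bounded (x - y).
Proof. by move=> bx /boundedN; apply: boundedD. Qed.

(* (n - x)(m + y) + (x + n)(m - y) = 2(nm - xy), and similarly for nm + xy. *)
Lemma boundedM x y : bounded x -> bounded y -> bounded (x * y).
Proof.
move=> [n [x1 x2]] [m [y1 y2]]; exists (n * m)%N; rewrite natrM; split; apply: pos_half.
  by move: (posD (posM x1 y2) (posM x2 y1)); congr (le 0); ring.
by move: (posD (posM x1 y1) (posM x2 y2)); congr (le 0); ring.
Qed.

Lemma bounded_int (z : int) : bounded z%:~R.
Proof.
by case: z => n; rewrite ?NegzE ?mulrNz -pmulrn; [|apply: boundedN]; exact: bounded_nat.
Qed.

Lemma bounded_sum (I : Type) (l : seq I) (g : I -> F) :
  (forall i, bounded (g i)) -> bounded (\sum_(i <- l) g i).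
Proof. by move=> bg; elim/big_rec: _ => [|i x _]; [exact: bounded0|apply: boundedD]. Qed.

Lemma bounded_recip s : pos (s - 1) -> bounded (recip s).
Proof.
move=> ps; exists 1%N; split; last exact: posD (pos_recip ps) pos1.
by move: (posM ps (pos_recip ps)); congr (le 0); ring: (mulr_recip ps).
Qed.

Ltac bounded_closure := repeat first [assumption | exact: bounded0 | exact: bounded1
  | exact: bounded_nat | exact: bounded_int
  | apply: boundedD | apply: boundedN | apply: boundedM].

Definition fval (a : F * F) := a.1 * recip a.2.

Lemma bdE a : bd le a <-> pos (a.2 - 1) /\ bounded (fval a).
Proof.
case: a => r s; rewrite /bd /frac_le /fval /=; split.
  move=> [/LocE ps [n [/leE lo /leE hi]]]; split=> //; exists n.
  have rs := mulr_recip ps; have pr := pos_recip ps.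
  by split; [move: (posM hi pr)|move: (posM lo pr)]; congr (le 0); ring: rs.
move=> [ps [n [lo hi]]]; split; first exact/LocE.
have rs := mulr_recip ps; have pos_s := pos_of_loc ps.
exists n; split; apply/leE; [move: (posM hi pos_s)|move: (posM lo pos_s)];
  by congr (le 0); ring: rs.
Qed.

Lemma bd_bounded x : bounded x -> bd le (x, 1).
Proof. by move=> bx; apply/bdE; rewrite /fval /= recip1 mulr1; split=> //; exact: loc1. Qed.

Lemma bd_one s : pos (s - 1) -> bd le (1, s).
Proof. by move=> ps; apply/bdE; rewrite /fval /= mul1r; split=> //; exact: bounded_recip. Qed.

Lemma bd_loc a : bd le a -> pos (a.2 - 1). Proof. by case/bdE. Qed.
Lemma bounded_fval a : bd le a -> bounded (fval a). Proof. by case/bdE. Qed.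

Lemma fval_add a b : bd le a -> bd le b -> fval (frac_add a b) = fval a + fval b.
Proof.
move=> /bd_loc pa /bd_loc pb; rewrite /fval /= recipM //.
by ring: (mulr_recip pa) (mulr_recip pb).
Qed.

Lemma fval_mul a b : bd le a -> bd le b -> fval (frac_mul a b) = fval a * fval b.
Proof. by move=> /bd_loc pa /bd_loc pb; rewrite /fval /= recipM //; ring. Qed.

Lemma bd_frac_add a b : bd le a -> bd le b -> bd le (frac_add a b).
Proof.
move=> ba bb; apply/bdE; rewrite fval_add //.
by split; [exact: locM (bd_loc ba) (bd_loc bb)|exact: boundedD (bounded_fval ba) (bounded_fval bb)].
Qed.

Lemma bd_frac_mul a b : bd le a -> bd le b -> bd le (frac_mul a b).
Proof.
move=> ba bb; apply/bdE; rewrite fval_mul //.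
by split; [exact: locM (bd_loc ba) (bd_loc bb)|exact: boundedM (bounded_fval ba) (bounded_fval bb)].
Qed.

Lemma fval_frac_eq a b : bd le a -> bd le b -> frac_eq a b -> fval a = fval b.
Proof.
move=> /bd_loc pa /bd_loc pb; rewrite /frac_eq /fval => e.
transitivity (a.1 * b.2 * recip a.2 * recip b.2); first by ring: (mulr_recip pb).
by rewrite e; ring: (mulr_recip pa).
Qed.

Variable RR : realType.

(** * Characters *)

Definition bd_morph (f : F -> RR) :=
  [/\ forall x y, bounded x -> bounded y -> f (x + y) = f x + f y,
      forall x y, bounded x -> bounded y -> f (x * y) = f x * f y,
      f 1 = 1 & forall x, bounded x -> pos x -> 0 <= f x].

Section BoundedMorphism.
Variables (f : F -> RR) (hf : bd_morph f).

Lemma morphD x y : bounded x -> bounded y -> f (x + y) = f x + f y.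
Proof. by case: hf => h _ _ _; apply: h. Qed.
Lemma morphM x y : bounded x -> bounded y -> f (x * y) = f x * f y.
Proof. by case: hf => _ h _ _; apply: h. Qed.
Lemma morph1 : f 1 = 1. Proof. by case: hf. Qed.
Lemma morph_ge0 x : bounded x -> pos x -> 0 <= f x.
Proof. by case: hf => _ _ _ h; apply: h. Qed.

Lemma morph0 : f 0 = 0.
Proof. by have := morphD bounded0 bounded0; rewrite addr0; lra. Qed.

Lemma morphN x : bounded x -> f (- x) = - f x.
Proof. by move=> bx; have := morphD (boundedN bx) bx; rewrite addNr morph0; lra. Qed.

Lemma morphB x y : bounded x -> bounded y -> f (x - y) = f x - f y.
Proof. by move=> bx by_; rewrite morphD ?morphN //; exact: boundedN. Qed.

Lemma morph_nat n : f n%:R = n%:R.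
Proof.
elim: n => [|n ih]; first exact: morph0.
by rewrite -addn1 !natrD morphD ?ih ?morph1 //; [exact: bounded_nat|exact: bounded1].
Qed.

Lemma morph_int (z : int) : f z%:~R = z%:~R.
Proof.
case: z => n; first by rewrite -!pmulrn morph_nat.
by rewrite NegzE !mulrNz -!pmulrn morphN ?morph_nat //; exact: bounded_nat.
Qed.

Lemma morph_sum (I : Type) (l : seq I) (g : I -> F) :
  (forall i, bounded (g i)) -> f (\sum_(i <- l) g i) = \sum_(i <- l) f (g i).
Proof.
move=> bg; elim: l => [|i l ih]; first by rewrite !big_nil morph0.
by rewrite !big_cons morphD ?ih //; exact: bounded_sum.
Qed.

End BoundedMorphism.

Definition char_of (f : F -> RR) (a : F * F) : RR :=
  if `[< bd le a >] then f (fval a) else 0.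

Lemma char_ofE f a : bd le a -> char_of f a = f (fval a).
Proof. by move=> ba; rewrite /char_of asboolT. Qed.

Lemma char_of_bounded f x : bounded x -> char_of f (x, 1) = f x.
Proof. by move=> /bd_bounded bx; rewrite char_ofE // /fval /= recip1 mulr1. Qed.

Lemma char_of_character f : bd_morph f -> is_character le (char_of f).
Proof.
move=> hf; split; first by move=> a nba; rewrite /char_of asboolF.
split; first by move=> a b ba bb e; rewrite !char_ofE // (fval_frac_eq ba bb e).
split.
  move=> a b ba bb; have bab := bd_frac_add ba bb.
  by rewrite !char_ofE // fval_add // (morphD hf (bounded_fval ba) (bounded_fval bb)).
split.
  move=> a b ba bb; have bab := bd_frac_mul ba bb.
  by rewrite !char_ofE // fval_mul // (morphM hf (bounded_fval ba) (bounded_fval bb)).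
split; first by rewrite char_of_bounded ?(morph1 hf) //; exact: bounded1.
move=> a ba; rewrite /frac_le /= mul0r mulr1 => pa1.
rewrite char_ofE //; apply: (morph_ge0 hf (bounded_fval ba)).
exact: posM pa1 (pos_recip (bd_loc ba)).
Qed.

Section Character.
Variables (phi : F * F -> RR) (hphi : is_character le phi).

Lemma character_fval a : bd le a -> phi a = phi (fval a, 1).
Proof.
move=> ba; have bv := bd_bounded (bounded_fval ba).
case: hphi => _ [phi_eq _]; apply: phi_eq => //; rewrite /frac_eq /fval /=.
by ring: (mulr_recip (bd_loc ba)).
Qed.

Lemma character_bd_morph : bd_morph (fun x => phi (x, 1)).
Proof.
case: hphi => _ [_ [phiD [phiM [phi1 phi_ge0]]]].
split=> // [x y /bd_bounded bx /bd_bounded by_|x y /bd_bounded bx /bd_bounded by_|x bx px].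
- rewrite -phiD // [RHS]character_fval; last exact: bd_frac_add.
  by rewrite fval_add // /fval /= recip1 !mulr1.
- rewrite -phiM // [RHS]character_fval; last exact: bd_frac_mul.
  by rewrite fval_mul // /fval /= recip1 !mulr1.
- by apply: phi_ge0; [exact: bd_bounded|rewrite /frac_le /= mul0r mulr1].
Qed.

End Character.

(** * Total cones and the standard part *)

Definition cone (Q : set F) :=
  [/\ forall x y, Q x -> Q y -> Q (x + y), forall x y, Q x -> Q y -> Q (x * y),
      forall x, Q (x * x) & ~ Q (-1)].

Definition extend (Q : set F) (a : F) : set F :=
  [set z | exists p q, [/\ Q p, Q q & z = p - a * q]].

Lemma cone0 Q : cone Q -> Q 0. Proof. by case=> _ _ /(_ 0); rewrite mulr0. Qed.
Lemma cone1 Q : cone Q -> Q 1. Proof. by case=> _ _ /(_ 1); rewrite mulr1. Qed.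

Lemma cone_pos : ~ pos (-1) -> cone (fun x => pos x).
Proof. by split=> //; [exact: posD|exact: posM|exact: pos_sqr]. Qed.

Lemma sub_extend Q a : cone Q -> Q `<=` extend Q a.
Proof. by move=> cQ z Qz; exists z, 0; rewrite mulr0 subr0; split=> //; exact: cone0. Qed.

Lemma extend_opp Q a : cone Q -> extend Q a (- a).
Proof. by move=> cQ; exists 0, 1; rewrite mulr1 sub0r; split=> //; [exact: cone0|exact: cone1]. Qed.

Lemma extend_cone Q a : cone Q -> ~ Q a -> cone (extend Q a).
Proof.
move=> cQ Qna; have [QD QM Qsqr Qm1] := cQ; split.
- move=> _ _ [p [q [Qp Qq ->]]] [p' [q' [Qp' Qq' ->]]].
  by exists (p + p'), (q + q'); split; [exact: QD|exact: QD|ring].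
- move=> _ _ [p [q [Qp Qq ->]]] [p' [q' [Qp' Qq' ->]]].
  exists (p * p' + (a * a) * (q * q')), (p * q' + q * p'); split; last by ring.
    by apply: QD (QM _ _ Qp Qp') (QM _ _ (Qsqr a) (QM _ _ Qq Qq')).
  by apply: QD (QM _ _ Qp Qq') (QM _ _ Qq Qp').
- by move=> x; apply: sub_extend.
(* From -1 = p - a q with q <> 0 we get a = (p + 1) q (q^-1)^2. *)
move=> [p [q [Qp Qq m1E]]]; have [q0|nq0] := eqVneq q 0.
  by apply: Qm1; rewrite m1E q0 mulr0 subr0.
have [u qu] := proj2 po _ nq0; apply: Qna.
have -> : a = (p + 1) * (q * (u * u)).
  have aq : a * q = p + 1.
    apply/eqP; rewrite -subr_eq0 (_ : _ - _ = - (p - a * q) - 1); last by ring.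
    by rewrite -m1E opprK subrr.
  by rewrite -aq; ring: qu.
by apply: QM (QD _ _ Qp (cone1 cQ)) (QM _ _ Qq (Qsqr u)).
Qed.

Lemma cone_bigcup (C : set F) (Fm : set (set F)) :
  cone C -> (forall X, Fm X -> cone (X `|` C)) -> total_on Fm subset ->
  cone (\bigcup_(X in Fm) X `|` C).
Proof.
move=> cC cFm chain; set U := _ `|` C.
have subU X : Fm X -> X `|` C `<=` U by move=> FmX z [Xz|Cz]; [left; exists X|right].
have common x y : U x -> U y -> exists2 Z, cone Z & [/\ Z `<=` U, Z x & Z y].
  move=> [[X FmX Xx]|Cx] [[Y FmY Yy]|Cy].
  - have [XY|YX] := chain X Y FmX FmY.
      by exists (Y `|` C) => //; [exact: cFm|split; [exact: subU|left; exact: XY|left]].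
    by exists (X `|` C) => //; [exact: cFm|split; [exact: subU|left|left; exact: YX]].
  - by exists (X `|` C) => //; [exact: cFm|split; [exact: subU|left|right]].
  - by exists (Y `|` C) => //; [exact: cFm|split; [exact: subU|right|left]].
  - by exists C => //; split=> // z Cz; right.
split.
- by move=> x y Ux Uy; have [Z [ZD _ _ _] [ZU Zx Zy]] := common x y Ux Uy; apply/ZU/ZD.
- by move=> x y Ux Uy; have [Z [_ ZM _ _] [ZU Zx Zy]] := common x y Ux Uy; apply/ZU/ZM.
- by move=> x; right; case: cC => _ _ + _; apply.
- move=> [[X FmX Xm1]|Cm1]; last by case: cC.
  by case: (cFm X FmX) => _ _ _; apply; left.
Qed.

Lemma exists_maximal_cone (C : set F) : cone C ->
  exists M, [/\ cone M, C `<=` M & forall B, M `<=` B -> cone B -> B `<=` M].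
Proof.
(* [Zorn_bigcup] also requires the empty chain to be bounded, hence the unions with C. *)
move=> cC; have [A [cAC maxA]] : exists A, cone (A `|` C) /\
    forall B, A `<` B -> ~ cone (B `|` C).
  by apply: Zorn_bigcup => Fm cFm chain; apply: cone_bigcup.
exists (A `|` C); split; [by []|by move=> z Cz; right|].
move=> B ACB cB.
have BC : B `|` C = B by apply/setUidPl => z Cz; apply: ACB; right.
have AB : A `<=` B by move=> z Az; apply: ACB; left.
have BA : B `<=` A by apply: contrapT => nBA; apply: (maxA B (conj AB nBA)); rewrite BC.
by move=> z Bz; left; apply: BA.
Qed.

Lemma maximal_cone_total M : cone M -> (forall B, M `<=` B -> cone B -> B `<=` M) ->
  forall a, M a \/ M (- a).
Proof.
move=> cM maxM a; have [|Mna] := pselect (M a); first by left.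
by right; apply: (maxM _ (sub_extend a cM) (extend_cone cM Mna)); exact: extend_opp.
Qed.

Lemma exists_total_cone c : ~ pos c ->
  exists M, [/\ cone M, (fun x => pos x) `<=` M, M (- c) & forall a, M a \/ M (- a)].
Proof.
move=> nc; have cpos : cone (fun x => pos x).
  by apply: cone_pos => pm1; apply: nc; rewrite (pos_opp1 pm1 c); exact: pos0.
have [M [cM CM maxM]] := exists_maximal_cone (extend_cone cpos nc).
exists M; split=> //; last exact: maximal_cone_total.
- by move=> z pz; apply/CM/sub_extend.
- by apply/CM/extend_opp.
Qed.

Section StandardPart.
Variable M : set F.
Hypotheses (cM : cone M) (pos_M : (fun x => pos x) `<=` M) (totM : forall a, M a \/ M (- a)).

Let MD x y : M x -> M y -> M (x + y). Proof. by case: cM => + _ _ _; apply. Qed.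
Let MM x y : M x -> M y -> M (x * y). Proof. by case: cM => _ + _ _; apply. Qed.
Let Mnat n : M n%:R. Proof. exact/pos_M/pos_nat. Qed.

Lemma cone_int_ge0 (z : int) : M z%:~R -> 0 <= z.
Proof.
case: z => // n; rewrite NegzE mulrNz -pmulrn => Mn; exfalso; case: cM => _ _ _; apply.
by move: (MD Mn (Mnat n)); congr M; rewrite -addn1 natrD; ring.
Qed.

Lemma cut_le x (n k : int) (m N : nat) :
  M (m.+1%:R * x - n%:~R) -> M (k%:~R - N.+1%:R * x) ->
  n%:~R / m.+1%:R <= k%:~R / N.+1%:R :> RR.
Proof.
move=> lo hi; have : M ((m.+1%:Z * k - N.+1%:Z * n)%:~R).
  rewrite intrB !intrM -!pmulrn; move: (MD (MM (Mnat N.+1) lo) (MM (Mnat m.+1) hi)).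
  by congr M; ring.
move/cone_int_ge0; rewrite subr_ge0 -(ler_int RR) !intrM -!pmulrn => le_nk.
by rewrite ler_pdivrMr // mulrAC ler_pdivlMr // mulrC [X in _ <= X]mulrC.
Qed.

Definition lower_cut x : set RR :=
  [set q | exists (n : int) (m : nat), q = n%:~R / m.+1%:R /\ M (m.+1%:R * x - n%:~R)].

Definition std x := sup (lower_cut x).

Lemma bounded_cut x : bounded x -> exists n : nat,
  M (n%:Z%:~R - 0%N.+1%:R * x) /\ M (0%N.+1%:R * x - (- n%:Z)%:~R).
Proof.
move=> [n [lo hi]]; exists n; rewrite mul1r intrN opprK -pmulrn.
by split; apply: pos_M.
Qed.

Lemma std_lower x (n : int) (m : nat) : bounded x ->
  M (m.+1%:R * x - n%:~R) -> n%:~R / m.+1%:R <= std x.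
Proof.
move=> /bounded_cut [k [hi _]] lo; apply: ub_le_sup; last by exists n, m.
by exists (k%:Z%:~R / 0%N.+1%:R) => _ [n' [m' [-> lo']]]; apply: cut_le lo' hi.
Qed.

Lemma std_upper x (k : int) (N : nat) : bounded x ->
  M (k%:~R - N.+1%:R * x) -> std x <= k%:~R / N.+1%:R.
Proof.
move=> /bounded_cut [n [_ lo]] hi; apply: ge_sup.
  by exists ((- n%:Z)%:~R / 0%N.+1%:R), (- n%:Z), 0%N.
by move=> _ [n' [m' [-> lo']]]; apply: cut_le lo' hi.
Qed.

Lemma cone_floor x (N : nat) : bounded x ->
  exists a : int, M (N.+1%:R * x - a%:~R) /\ M ((a + 1)%:~R - N.+1%:R * x).
Proof.
move=> bx; have [n [lo hi]] := boundedM (bounded_nat N.+1) bx.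
pose P k := M (N.+1%:R * x + n%:R - k%:R).
have P0 : P 0%N by apply: pos_M; rewrite /P subr0.
have nP : ~ P (n + n).+1.
  move=> Pn; case: cM => _ _ _; apply; move: (MD Pn (pos_M lo)).
  by rewrite -addn1 !natrD; congr M; ring.
have [k [Pk nPk]] := exists_nat_boundary P0 nP; exists (k%:Z - n%:Z).
rewrite !intrD intrN -!pmulrn; split; first by move: Pk; congr M; ring.
have [//|] := totM (N.+1%:R * x + n%:R - k.+1%:R).
by rewrite -addn1 natrD; congr M; ring.
Qed.

Lemma std_bounds x (N : nat) : bounded x -> exists a : int,
  [/\ M (N.+1%:R * x - a%:~R), M ((a + 1)%:~R - N.+1%:R * x),
      a%:~R / N.+1%:R <= std x & std x <= (a + 1)%:~R / N.+1%:R].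
Proof.
move=> bx; have [a [lo hi]] := cone_floor N bx.
by exists a; split=> //; [apply: std_lower|apply: std_upper].
Qed.

Lemma stdD x y : bounded x -> bounded y -> std (x + y) = std x + std y.
Proof.
move=> bx by_; apply: subr0_eq; apply: (@eq0_of_natmul_bounded _ _ 2) => N.
have [a [xlo xhi ax xa]] := std_bounds N bx.
have [b [ylo yhi b_y yb]] := std_bounds N by_.
have lo : (a + b)%:~R / N.+1%:R <= std (x + y).
  by apply: std_lower (boundedD bx by_) _; move: (MD xlo ylo); rewrite intrD; congr M; ring.
have hi : std (x + y) <= ((a + 1) + (b + 1))%:~R / N.+1%:R.
  by apply: std_upper (boundedD bx by_) _; move: (MD xhi yhi); rewrite intrD; congr M; ring.
rewrite mulrC -ler_pdivlMr // ler_norml.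
move: lo hi ax xa b_y yb; rewrite !intrD /=; set w := N.+1%:R^-1 => *; lra.
Qed.

Lemma std0 : std 0 = 0.
Proof. by have := stdD bounded0 bounded0; rewrite addr0; lra. Qed.

Lemma stdN x : bounded x -> std (- x) = - std x.
Proof. by move=> bx; have := stdD bx (boundedN bx); rewrite subrr std0; lra. Qed.

Lemma std_natM n x : bounded x -> std (n%:R * x) = n%:R * std x.
Proof.
move=> bx; elim: n => [|n ih]; first by rewrite !mul0r std0.
by rewrite -addn1 !natrD !mulrDl !mul1r stdD ?ih //; apply: boundedM (bounded_nat n) bx.
Qed.

Lemma std_intM (k : int) x : bounded x -> std (k%:~R * x) = k%:~R * std x.
Proof.
move=> bx; case: k => n; first by rewrite -!pmulrn std_natM.
by rewrite NegzE !mulrNz -!pmulrn !mulNr stdN ?std_natM //; apply: boundedM (bounded_nat _) bx.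
Qed.

Lemma std_ge0 x : bounded x -> M x -> 0 <= std x.
Proof.
by move=> bx Mx; have := @std_lower x 0 0 bx; rewrite mul0r; apply; rewrite mul1r subr0.
Qed.

Lemma std_le1 x : bounded x -> M (1 - x) -> std x <= 1.
Proof. by move=> bx Mx; have := @std_upper x 1 0 bx; rewrite divr1; apply; rewrite mul1r. Qed.

Lemma std1 : std 1 = 1.
Proof.
have M0 : M (1 - 1) by rewrite subrr; exact: Mnat 0.
apply/le_anti/andP; split; first exact: std_le1 bounded1 M0.
by have := @std_lower 1 1 0 bounded1; rewrite mulr1 divr1; apply.
Qed.

Lemma std_int (k : int) : std k%:~R = k%:~R.
Proof. by have := std_intM k bounded1; rewrite !mulr1 std1 mulr1. Qed.

Lemma std_mul_unit z w : bounded z -> bounded w ->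
  M z -> M (1 - z) -> M w -> M (1 - w) -> `|std (z * w) - std z * std w| <= 1.
Proof.
move=> bz bw Mz Mz1 Mw Mw1; have bzw := boundedM bz bw.
have zw1 : M (1 - z * w) by move: (MD Mz1 (MM Mz Mw1)); congr M; ring.
have := std_ge0 bzw (MM Mz Mw); have := std_le1 bzw zw1.
have := std_ge0 bz Mz; have := std_le1 bz Mz1; have := std_ge0 bw Mw; have := std_le1 bw Mw1.
by rewrite ler_norml; move=> *; apply/andP; split; nra.
Qed.

(* Write (N+1) x = a + z and (N+1) y = b + w with integers a, b and z, w in [0, 1]: then
   (N+1)^2 (std (x y) - std x std y) = std (z w) - std z std w lies in [-1, 1]. *)
Lemma std_mul x y : bounded x -> bounded y -> std (x * y) = std x * std y.
Proof.
move=> bx by_; apply: subr0_eq; apply: (@eq0_of_natmul_bounded _ _ 1) => N.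
have [a [Mz Mz1]] := cone_floor N bx; have [b [Mw Mw1]] := cone_floor N by_.
set z := _ - a%:~R in Mz Mz1; set w := _ - b%:~R in Mw Mw1.
have bz : bounded z by rewrite /z; bounded_closure.
have bw : bounded w by rewrite /w; bounded_closure.
have {}Mz1 : M (1 - z) by move: Mz1; rewrite intrD; congr M; rewrite /z; ring.
have {}Mw1 : M (1 - w) by move: Mw1; rewrite intrD; congr M; rewrite /w; ring.
have ex : N.+1%:R * x = a%:~R + z by rewrite /z; ring.
have ey : N.+1%:R * y = b%:~R + w by rewrite /w; ring.
have exy : (N.+1 * N.+1)%:R * (x * y) = (a * b)%:~R + a%:~R * w + b%:~R * z + z * w.
  by rewrite /z /w intrM natrM; ring.
clearbody z w.
have stdx : N.+1%:R * std x = a%:~R + std z.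
  by rewrite -std_natM // ex stdD ?std_int //; bounded_closure.
have stdy : N.+1%:R * std y = b%:~R + std w.
  by rewrite -std_natM // ey stdD ?std_int //; bounded_closure.
have stdxy : N.+1%:R * N.+1%:R * std (x * y) =
    (a * b)%:~R + a%:~R * std w + b%:~R * std z + std (z * w).
  rewrite -natrM -std_natM ?exy; last by bounded_closure.
  by rewrite !stdD ?std_intM ?std_int //; bounded_closure.
have := std_mul_unit bz bw Mz Mz1 Mw Mw1.
rewrite (_ : _ - _ = N.+1%:R * N.+1%:R * (std (x * y) - std x * std y)); last first.
  by rewrite mulrBr stdxy mulrACA stdx stdy intrM; ring.
rewrite !normrM !normr_nat -mulrA; apply: le_trans.
by rewrite ler_peMl // ler1n.
Qed.

Lemma std_bd_morph : bd_morph std.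
Proof.
split; [exact: stdD|exact: std_mul|exact: std1|].
by move=> x bx px; apply: std_ge0 bx (pos_M px).
Qed.

End StandardPart.

(** * Separation and density *)

Hypothesis arch : archimedean le.

Lemma exists_morph_pos g : bounded g -> ~ pos (- g) -> exists2 f, bd_morph f & 0 < f g.
Proof.
move=> bg ng; have [k nk] : exists k : nat, ~ pos (k.+1%:R * - g + 1).
  by apply/existsNP => all_pos; apply/ng/(arch all_pos).
have [M [cM pos_M Mc totM]] := exists_total_cone nk.
exists (std M); first exact: std_bd_morph.
have bc : bounded (k.+1%:R * - g + 1) by bounded_closure.
have := std_ge0 cM pos_M (boundedN bc) Mc; rewrite !(stdN cM pos_M) //.
rewrite (stdD cM pos_M) ?std_natM ?stdN ?(std1 cM pos_M) //; try bounded_closure.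
by rewrite mulrN => ?; rewrite -(pmulr_rgt0 _ (ltr0Sn _ k)); lra.
Qed.

Local Notation X := (set_type (Kset le RR)).

Definition restr (c : X) (x : F) : RR := set_val c (x, 1).

Lemma is_character_point (c : X) : is_character le (set_val c).
Proof. by have := set_valP c. Qed.

Lemma restr_morph c : bd_morph (restr c).
Proof. exact: character_bd_morph (is_character_point c). Qed.

Lemma eval_fval c a : bd le a -> set_val c a = restr c (fval a).
Proof. by move=> ba; rewrite /restr (character_fval (is_character_point c) ba). Qed.

Lemma eval_recip c s : pos (s - 1) -> set_val c (1, s) = restr c (recip s).
Proof.
by move=> ps; rewrite (eval_fval c (bd_one ps)) /fval /= mul1r.
Qed.

Lemma exists_point_pos g : bounded g -> ~ pos (- g) -> exists c : X, 0 < restr c g.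
Proof.
move=> bg ng; have [f mf fg] := exists_morph_pos bg ng.
rewrite -(char_of_bounded f bg) in fg.
by exists (@exist _ _ (char_of f) (mem_set (char_of_character mf)) : X).
Qed.

Lemma exists_point_Oinf g s : bounded g -> ~ pos (- g) -> pos (s - 1) ->
  exists c, Oinf le RR s c /\ 0 < restr c g.
Proof.
move=> bg ng ps; have bgs := boundedM bg (bounded_recip ps).
have ngs : ~ pos (- (g * recip s)).
  move=> pgs; apply: ng; move: (posM pgs (pos_of_loc ps)); congr (le 0).
  by ring: (mulr_recip ps).
have [c cgs] := exists_point_pos bgs ngs; exists c.
have rs0 := morph_ge0 (restr_morph c) (bounded_recip ps) (pos_recip ps).
move: cgs; rewrite (morphM (restr_morph c) bg (bounded_recip ps)) /Oinf /= eval_recip //.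
have [->|rs_neq0] := eqVneq (restr c (recip s)) 0; first by rewrite mulr0 ltxx.
have rs_gt0 : 0 < restr c (recip s) by rewrite lt_def rs_neq0.
by rewrite pmulr_lgt0.
Qed.

Definition bdfval (a : F * F) : F := if `[< bd le a >] then fval a else 0.

Lemma bounded_bdfval a : bounded (bdfval a).
Proof.
by rewrite /bdfval; case: ifPn => [/asboolP ba|_]; [exact: bounded_fval|exact: bounded0].
Qed.

Lemma eval_bdfval c a : set_val c a = restr c (bdfval a).
Proof.
rewrite /bdfval; case: ifPn => [/asboolP/eval_fval //|/asboolP nba].
by rewrite (morph0 (restr_morph c)); case: (is_character_point c) => + _; apply.
Qed.

(* With z_p = (N+1) bdfval p - floor ((N+1) c0 p), the element g = (n + 1) - sum_p z_p^2 has value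
   >= 1 at c0, and every character at which g is positive is (n + 2)/(N + 1)-close to c0 on l. *)
Lemma exists_point_near (c0 : X) (l : seq (F * F)) (e : RR) s : pos (s - 1) -> 0 < e ->
  exists c, Oinf le RR s c /\ forall p, p \in l -> `|set_val c p - set_val c0 p| < e.
Proof.
move=> ps e0; set n := size l; set N := Num.truncn ((n.+2)%:R / e).
have Ne : (n.+2)%:R < N.+1%:R * e by rewrite -ltr_pdivrMr //; exact: truncnS_gt.
pose a p := Num.floor (N.+1%:R * set_val c0 p).
pose z p := N.+1%:R * bdfval p - (a p)%:~R.
pose d (c : X) p := N.+1%:R * set_val c p - (a p)%:~R.
pose g := n.+1%:R - \sum_(p <- l) z p * z p.
have bz p : bounded (z p) by have := bounded_bdfval p; rewrite /z => ?; bounded_closure.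
have bg : bounded g.
  by apply: boundedB; [exact: bounded_nat|apply: bounded_sum => p; exact: boundedM].
have restr_z c p : restr c (z p) = d c p.
  have mc := restr_morph c; have bp := bounded_bdfval p.
  rewrite /z (morphB mc) ?(morphM mc) ?(morph_nat mc) ?(morph_int mc) -?eval_bdfval //.
  all: bounded_closure.
have restr_g c : restr c g = n.+1%:R - \sum_(p <- l) d c p ^+ 2.
  have mc := restr_morph c; have bzz p : bounded (z p * z p) by apply: boundedM.
  rewrite /g (morphB mc (bounded_nat _) (bounded_sum l bzz)) (morph_nat mc).
  rewrite (morph_sum mc l bzz).
  by congr (_ - _); apply: eq_bigr => p _; rewrite (morphM mc) // restr_z expr2.
have d0 p : 0 <= d c0 p < 1.
  have := floorD1_gt (N.+1%:R * set_val c0 p); have := floor_le (N.+1%:R * set_val c0 p).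
  by rewrite intrD /d /a => ? ?; apply/andP; split; lra.
have ng : ~ pos (- g).
  move=> /(morph_ge0 (restr_morph c0) (boundedN bg)); rewrite (morphN (restr_morph c0)) // restr_g.
  have d01 p : 0 <= d c0 p <= 1 by case/andP: (d0 p) => -> /ltW.
  by have := sum_sqr_le_size l d01; rewrite -[n.+1]addn1 natrD; lra.
have [c [Oc gc]] := exists_point_Oinf bg ng ps; exists c; split=> // p pl.
have dc : `|d c p| < n.+1%:R.
  by apply: norm_lt_of_sum_sqr pl _; [rewrite ler1n|rewrite -subr_gt0 -restr_g].
have /andP[dc0 dc1] := d0 p.
have : `|d c p - d c0 p| < N.+1%:R * e.
  apply: le_lt_trans (ler_normB _ _) (lt_trans _ Ne).
  by rewrite (ger0_norm dc0) -[n.+2]addn1 natrD; lra.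
rewrite (_ : _ - _ = N.+1%:R * (set_val c p - set_val c0 p)); last by rewrite /d; ring.
by rewrite normrM ger0_norm // ltr_pM2l.
Qed.

Lemma dense_Oinf s : pos (s - 1) -> dense (Oinf le RR s).
Proof.
(* The sets [B q] below form a proper filter base (by [exists_point_near]) converging to c0,
   hence they eventually lie in any neighbourhood O of c0. *)
move=> ps O [c0 Oc0] oO.
pose B (q : seq (F * F) * RR) := [set c : X | Oinf le RR s c /\
  forall p, p \in q.1 -> `|set_val c p - set_val c0 p| < q.2].
pose G := filter_from [set q | 0 < q.2] B.
have FG : ProperFilter G.
  apply: filter_from_proper; last first.
    by move=> [l e] /= e0; have [c] := exists_point_near c0 l ps e0; exists c.
  apply: filter_from_filter; first by exists ([::], 1) => /=.
  move=> [l1 e1] [l2 e2] /= e1_gt0 e2_gt0; exists (l1 ++ l2, Num.min e1 e2).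
    by rewrite /= lt_min e1_gt0.
  move=> c [Oc near_c] /=; split; split=> // p pl; have := near_c p;
    by rewrite mem_cat pl ?orbT lt_min => /(_ isT) /andP[].
have cvgG : G --> c0.
  apply: cvg_character => p; apply/cvgrPdist_lt => e e0.
  by exists ([:: p], e) => //= c [_ near_c]; rewrite distrC; apply: near_c; rewrite mem_seq1.
have GO : G O by apply: cvgG; exact: open_nbhs_nbhs.
have GOinf : G (Oinf le RR s) by exists ([::], 1) => //= c [].
by have [c [Oc Oinfc]] := filter_ex (filterI GO GOinf); exists c.
Qed.

Lemma Oinf_recip c s : pos (s - 1) -> Oinf le RR s c = (0 < restr c (recip s)).
Proof. by move=> ps; rewrite /Oinf /= eval_recip. Qed.

Lemma gelE c r s : bd le (r, s) ->
  gel le RR r s c = (restr c (recip s))^-1 * restr c (fval (r, s)).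
Proof. by move=> brs; rewrite /gel eval_recip ?eval_fval //; exact: bd_loc brs. Qed.

(** * The Gelfand transform *)

Lemma bd_mulr r s t : bd le (r, s) -> pos (t - 1) -> bd le (r, s * t).
Proof.
move=> brs pt; have ps : pos (s - 1) := bd_loc brs.
apply/bdE; split; first exact: locM ps pt.
have -> : fval (r, s * t) = fval (r, s) * recip t by rewrite /fval /= recipM // mulrA.
exact: boundedM (bounded_fval brs) (bounded_recip pt).
Qed.

Lemma bdD r r' s : bd le (r, s) -> bd le (r', s) -> bd le (r + r', s).
Proof.
move=> brs brs'; apply/bdE; split; first exact: bd_loc brs.
by rewrite /fval /= mulrDl; apply: boundedD (bounded_fval brs) (bounded_fval brs').
Qed.

Lemma OinfM s t : pos (s - 1) -> pos (t - 1) ->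
  Oinf le RR (s * t) = Oinf le RR s `&` Oinf le RR t.
Proof.
move=> ps pt; have pst := locM ps pt.
apply/seteqP; split=> c; rewrite /= !Oinf_recip // recipM //;
  have mc := restr_morph c; rewrite (morphM mc (bounded_recip ps) (bounded_recip pt));
  have := morph_ge0 mc (bounded_recip ps) (pos_recip ps);
  have := morph_ge0 mc (bounded_recip pt) (pos_recip pt).
- by move=> *; split; nra.
- by move=> _ _ [? ?]; apply: mulr_gt0.
Qed.

Lemma gel_change_denom c r s t : bd le (r, s) -> bd le (r, t) ->
  Oinf le RR s c -> Oinf le RR t c -> gel le RR r s c = gel le RR r t c.
Proof.
move=> brs brt; have ps : pos (s - 1) := bd_loc brs; have pt : pos (t - 1) := bd_loc brt.
rewrite !Oinf_recip // => s0 t0; have mc := restr_morph c.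
have : fval (r, s) * recip t = fval (r, t) * recip s by rewrite /fval /=; ring.
move/(congr1 (restr c)).
rewrite (morphM mc (bounded_fval brs) (bounded_recip pt)).
rewrite (morphM mc (bounded_fval brt) (bounded_recip ps)) => e.
rewrite !gelE // -[restr c (fval (r, t))](mulfK (lt0r_neq0 s0)) -e.
by field; rewrite !lt0r_neq0.
Qed.

Lemma gelD_denom c r r' s : bd le (r, s) -> bd le (r', s) ->
  gel le RR (r + r') s c = gel le RR r s c + gel le RR r' s c.
Proof.
move=> brs brs'; rewrite (gelE _ (bdD brs brs')) (gelE _ brs) (gelE _ brs') -mulrDr.
by rewrite -(morphD (restr_morph c) (bounded_fval brs) (bounded_fval brs')) /fval /= mulrDl.
Qed.

Lemma gelM_frac c r r' s s' : bd le (r, s) -> bd le (r', s') ->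
  gel le RR (r * r') (s * s') c = gel le RR r s c * gel le RR r' s' c.
Proof.
move=> brs brs'; have ps : pos (s - 1) := bd_loc brs; have ps' : pos (s' - 1) := bd_loc brs'.
have mc := restr_morph c.
rewrite (gelE _ (bd_frac_mul brs brs' : bd le (r * r', s * s'))) (gelE _ brs) (gelE _ brs').
rewrite (fval_mul brs brs') recipM // (morphM mc (bounded_recip ps) (bounded_recip ps')).
by rewrite (morphM mc (bounded_fval brs) (bounded_fval brs')) invfM mulrACA.
Qed.

Section GelfandIdentities.
Variables (c : X) (r r' s s' t : F).
Hypotheses (brs : bd le (r, s)) (brs' : bd le (r', s')).
Hypotheses (Ot : Oinf le RR t c) (Os : Oinf le RR s c) (Os' : Oinf le RR s' c).

Let ps : pos (s - 1) := bd_loc brs.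
Let ps' : pos (s' - 1) := bd_loc brs'.
Let Oss' : Oinf le RR (s * s') c. Proof. by rewrite OinfM. Qed.

Lemma gelD : bd le (r + r', t) ->
  gel le RR (r + r') t c = gel le RR r s c + gel le RR r' s' c.
Proof.
move=> bt; have bu := bd_mulr brs ps'; have bu' := bd_mulr brs' ps; rewrite mulrC in bu'.
rewrite (gel_change_denom bt (bdD bu bu') Ot Oss') gelD_denom //.
by rewrite (gel_change_denom bu brs Oss' Os) (gel_change_denom bu' brs' Oss' Os').
Qed.

Lemma gelM : bd le (r * r', t) ->
  gel le RR (r * r') t c = gel le RR r s c * gel le RR r' s' c.
Proof.
move=> bt; rewrite (gel_change_denom bt (bd_frac_mul brs brs') Ot Oss').
exact: gelM_frac.
Qed.

End GelfandIdentities.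

Lemma gel1 c t : Oinf le RR t c -> gel le RR 1 t c = 1.
Proof. by rewrite /gel /Oinf /= => t0; rewrite mulVf ?gt_eqF. Qed.

Lemma gel_ge0 c r s : bd le (r, s) -> pos r -> 0 <= gel le RR r s c.
Proof.
move=> brs pr; have ps : pos (s - 1) := bd_loc brs; have mc := restr_morph c; rewrite gelE //.
have := morph_ge0 mc (bounded_recip ps) (pos_recip ps).
have := morph_ge0 mc (bounded_fval brs) (posM pr (pos_recip ps)).
by move=> ? ?; apply: mulr_ge0; rewrite ?invr_ge0.
Qed.

Lemma open_dense_Oinf3 s s' t : pos (s - 1) -> pos (s' - 1) -> pos (t - 1) ->
  open (Oinf le RR t `&` (Oinf le RR s `&` Oinf le RR s')) /\
  dense (Oinf le RR t `&` (Oinf le RR s `&` Oinf le RR s')).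
Proof.
move=> ps ps' pt; rewrite -(OinfM ps ps') -(OinfM pt (locM ps ps')).
by split; [exact: open_Oinf|exact: dense_Oinf (locM pt (locM ps ps'))].
Qed.

Lemma cae_elem_gel r s : bd le (r, s) -> cae_elem (Oinf le RR s) (gel le RR r s).
Proof.
move=> brs; have ps : pos (s - 1) := bd_loc brs.
by split; [exact: open_Oinf|exact: dense_Oinf|exact: gel_continuous].
Qed.

Lemma cae_gelD r r' s s' t : bd le (r, s) -> bd le (r', s') -> bd le (r + r', t) ->
  cae_eq (Oinf le RR t) (gel le RR (r + r') t)
         (Oinf le RR s `&` Oinf le RR s') (gel le RR r s \+ gel le RR r' s').
Proof.
move=> brs brs' bt; have [oU dU] := open_dense_Oinf3 (bd_loc brs) (bd_loc brs') (bd_loc bt).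
by apply: cae_eqW => // c [Ot [Os Os']]; exact: gelD.
Qed.

Lemma cae_gelM r r' s s' t : bd le (r, s) -> bd le (r', s') -> bd le (r * r', t) ->
  cae_eq (Oinf le RR t) (gel le RR (r * r') t)
         (Oinf le RR s `&` Oinf le RR s') (gel le RR r s \* gel le RR r' s').
Proof.
move=> brs brs' bt; have [oU dU] := open_dense_Oinf3 (bd_loc brs) (bd_loc brs') (bd_loc bt).
by apply: cae_eqW => // c [Ot [Os Os']]; exact: gelM.
Qed.

Lemma cae_gel1 t : bd le (1, t) -> cae_eq (Oinf le RR t) (gel le RR 1 t) setT (fun _ => 1).
Proof.
move=> bt; have pt : pos (t - 1) := bd_loc bt.
by apply: cae_eqW; rewrite setIT; [exact: open_Oinf|exact: dense_Oinf|move=> c; exact: gel1].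
Qed.

Lemma cae_gel_ge0 r s : bd le (r, s) -> pos r ->
  cae_le setT (fun _ => 0) (Oinf le RR s) (gel le RR r s).
Proof.
move=> brs pr; have ps : pos (s - 1) := bd_loc brs.
by apply: cae_leW; rewrite setTI; [exact: open_Oinf|exact: dense_Oinf|move=> c _; exact: gel_ge0].
Qed.

Lemma pos_of_gel_ge0 r s : bd le (r, s) ->
  cae_le setT (fun _ => 0) (Oinf le RR s) (gel le RR r s) -> pos r.
Proof.
move=> brs [U [oU dU _ U_ge0]]; have ps : pos (s - 1) := bd_loc brs.
apply: contrapT => nr; have ng : ~ pos (- - fval (r, s)).
  rewrite opprK => prs; apply: nr; move: (posM prs (pos_of_loc ps)); congr (le 0).
  by rewrite /fval /=; ring: (mulr_recip ps).
have [c [Oc gc]] := exists_point_Oinf (boundedN (bounded_fval brs)) ng ps.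
pose V := Oinf le RR s `&` [set d : X | set_val d (r, s) < 0].
have oV : open V by apply: openI; [exact: open_Oinf|exact: open_eval_lt0].
have Vc : V c.
  split=> //=; rewrite eval_fval // -oppr_gt0.
  by rewrite -(morphN (restr_morph c) (bounded_fval brs)).
have [d [[Od d_lt0] Ud]] := dU V (ex_intro _ c Vc) oV.
have := U_ge0 d Ud; rewrite /gel pmulr_rge0 ?invr_gt0 //.
by rewrite leNgt d_lt0.
Qed.

End POField.

Theorem theorem39 (F : comPzRingType) (le : F -> F -> Prop) (RR : realType) :
  po_field le -> archimedean le ->
  localizable le /\
  (forall r s : F, bd le (r, s) ->
     cae_elem (Oinf le RR s) (gel le RR r s)) /\
  (forall r r' s s' t : F, bd le (r, s) -> bd le (r', s') -> bd le (r + r', t) ->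
     cae_eq (Oinf le RR t) (gel le RR (r + r') t)
            (Oinf le RR s `&` Oinf le RR s') (gel le RR r s \+ gel le RR r' s')) /\
  (forall r r' s s' t : F, bd le (r, s) -> bd le (r', s') -> bd le (r * r', t) ->
     cae_eq (Oinf le RR t) (gel le RR (r * r') t)
            (Oinf le RR s `&` Oinf le RR s') (gel le RR r s \* gel le RR r' s')) /\
  (forall t : F, bd le (1, t) ->
     cae_eq (Oinf le RR t) (gel le RR 1 t) setT (fun _ => 1)) /\
  (forall r s : F, bd le (r, s) -> le 0 r ->
     cae_le setT (fun _ => 0) (Oinf le RR s) (gel le RR r s)) /\
  (forall r s : F, bd le (r, s) ->
     cae_le setT (fun _ => 0) (Oinf le RR s) (gel le RR r s) -> le 0 r).
Proof.
move=> po arch; split; first exact: po_field_localizable.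
split; first exact: cae_elem_gel po RR arch.
split; first exact: cae_gelD po RR arch.
split; first exact: cae_gelM po RR arch.
split; first exact: cae_gel1 po RR arch.
split; first exact: cae_gel_ge0 po RR arch.
exact: pos_of_gel_ge0 po RR arch.
Qed.
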